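(* Let $l,k\ge 2$ be integers, $q$ a prime number and $\mathbb{A}\subseteq\mathbb{Q}$. Then: (1) $\mathbb{A}\text{-}\mathcal{KS}(q^{2})\subseteq\mathbb{A}\text{-}\mathcal{KS}(q^{l})$; (2) if $(k-1)\mid(l-1)$, then $\mathbb{A}\text{-}\mathcal{KS}(q^{k})\subseteq\mathbb{A}\text{-}\mathcal{KS}(q^{l})$.
   Context: Every nonzero rational $\alpha$ is written $\alpha=\alpha_1/\alpha_2$ with $\alpha_1\in\mathbb{Z}$, $\alpha_2$ a positive integer and $\gcd(\alpha_1,\alpha_2)=1$. For an integer $N\ge 2$ and a nonzero rational $\alpha=\alpha_1/\alpha_2$, $N$ is called an $\alpha$-Korselt number if $N\neq\alpha$ and $\alpha_2p-\alpha_1$ divides $\alpha_2N-\alpha_1$ (in $\mathbb{Z}$) for every prime divisor $p$ of $N$. For $\mathbb{A}\subseteq\mathbb{Q}$, $\mathbb{A}\text{-}\mathcal{KS}(N)$ is the set of all $\beta\in\mathbb{A}\setminus\{0,N\}$ such that $N$ is a $\beta$-Korselt number. *)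

From mathcomp Require Import all_boot all_order all_algebra.
Set Implicit Arguments. Unset Strict Implicit. Unset Printing Implicit Defensive.
Import Order.TTheory GRing.Theory Num.Theory.
Local Open Scope ring_scope.

(* alpha = numq alpha / denq alpha, with denq > 0 and coprime: the normal form
   alpha_1 / alpha_2 of the paper. *)

Definition korselt (N : nat) (alpha : rat) : Prop :=
  (2 <= N)%N /\ alpha != 0 /\ alpha != (N%:R : rat) /\
  forall p : nat, prime p -> (p %| N)%N ->
    (denq alpha * (p%:Z) - numq alpha %| denq alpha * (N%:Z) - numq alpha)%Z.

Definition KS (A : rat -> Prop) (N : nat) (beta : rat) : Prop :=
  A beta /\ beta != 0 /\ beta != (N%:R : rat) /\ korselt N beta.

From mathcomp Require Import all_boot all_order all_algebra zify ring.
Import Order.TTheory GRing.Theory Num.Theory.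
Local Open Scope ring_scope.

(* Write beta = b / a.  The only prime factor of q^n is q, so beta is a
   q^n-Korselt number iff a q - b divides a q^n - b.  Since
   a q^n - b = a q (q^(n-1) - 1) + (a q - b) and q^(k-1) - 1 divides
   q^(l-1) - 1 whenever k - 1 divides l - 1, this divisibility passes from
   q^k to q^l.  The side condition beta <> q^l survives as well: beta = q^l
   would make q^l - q divide q^l - q^k, although 0 < q^l - q^k < q^l - q. *)

Lemma dvdz_mulX_sub (a b x : int) (m n : nat) : (m %| n)%N ->
  (a * x - b %| a * x ^+ m.+1 - b)%Z -> (a * x - b %| a * x ^+ n.+1 - b)%Z.
Proof.
have split_pow j : a * x ^+ j.+1 - b = a * x * (x ^+ j - 1) + (a * x - b).
  by rewrite exprSr; ring.
move=> /dvdnP[t ->]; rewrite !split_pow !(rpredDr _ (dvdzz _)) => dvd_m.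
by rewrite mulnC exprM subrX1 mulrA dvdz_mulr.
Qed.

Lemma ndvdz_sub_lt [x y z : int] : x < y < z -> ~~ (x - z %| y - z)%Z.
Proof.
move=> /andP[lt_xy lt_yz]; rewrite dvdzE; apply/negP => /dvdn_leq; lia.
Qed.

Lemma korselt_prime_powerP (q n : nat) (beta : rat) : prime q -> (0 < n)%N ->
  korselt (q ^ n) beta <->
  [/\ beta != 0, beta != (q ^ n)%N%:R
    & (denq beta * q%:Z - numq beta %| denq beta * (q ^ n)%N%:Z - numq beta)%Z].
Proof.
move=> q_pr n_gt0; split.
  by case=> _ [beta0 [betaN dvd_p]]; split=> //; apply: dvd_p; rewrite ?dvdn_exp.
case=> beta0 betaN dvd_q; split.
  by rewrite (leq_trans (prime_gt1 q_pr)) // -{1}(expn1 q) leq_exp2l ?prime_gt1.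
do 2!split=> //; move=> p p_pr; rewrite Euclid_dvdX // => /andP[dvd_pq _].
by move: dvd_pq; rewrite dvdn_prime2 // => /eqP ->.
Qed.

Lemma korselt_dvd_neq_prime_power (q k l : nat) (beta : rat) :
  prime q -> (1 < k < l)%N ->
  (denq beta * q%:Z - numq beta %| denq beta * (q ^ k)%N%:Z - numq beta)%Z ->
  beta != (q ^ l)%N%:R.
Proof.
move=> q_pr lt_kl dvd_k.
have lt_qkl : q%:Z < (q ^ k)%N%:Z < (q ^ l)%N%:Z.
  by rewrite !ltz_nat -{1}(expn1 q) !ltn_exp2l // prime_gt1.
apply: contraNneq (ndvdz_sub_lt lt_qkl) => def_beta.
by move: dvd_k; rewrite def_beta pmulrn numq_int denq_int !mul1r.
Qed.

Lemma KS_prime_power_mono (A : rat -> Prop) (q k l : nat) (beta : rat) :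
  prime q -> (0 < k)%N -> (1 < l)%N -> (k.-1 %| l.-1)%N ->
  KS A (q ^ k) beta -> KS A (q ^ l) beta.
Proof.
move=> q_pr k_gt0 l_gt1 dvd_kl [Abeta [_ [_ /korselt_prime_powerP[//|//|]]]].
move=> beta0 betak dvd_k.
have dvd_l : (denq beta * q%:Z - numq beta %| denq beta * (q ^ l)%N%:Z - numq beta)%Z.
  move: dvd_k; rewrite -!natz !natrX -(prednK k_gt0) -(prednK (ltnW l_gt1)).
  exact: dvdz_mulX_sub.
have betal : beta != (q ^ l)%N%:R.
  have [<- //|neq_kl] := eqVneq k l.
  apply: korselt_dvd_neq_prime_power q_pr _ dvd_k.
  have k1_gt0 : (0 < k.-1)%N.
    by rewrite lt0n; apply: contraTneq dvd_kl => ->; rewrite dvd0n -lt0n; lia.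
  have := dvdn_leq _ dvd_kl; lia.
by split=> //; do 2!split=> //; apply/korselt_prime_powerP; rewrite ?(ltnW l_gt1).
Qed.

Theorem proposition2p6 (l k q : nat) (A : rat -> Prop) :
  (2 <= l)%N -> (2 <= k)%N -> prime q ->
  (forall beta : rat, KS A (q ^ 2) beta -> KS A (q ^ l) beta) /\
  ((k.-1 %| l.-1)%N ->
     forall beta : rat, KS A (q ^ k) beta -> KS A (q ^ l) beta).
Proof.
move=> l_ge2 k_ge2 q_pr; split=> [beta|dvd_kl beta].
  by apply: KS_prime_power_mono; rewrite ?dvd1n.
exact: KS_prime_power_mono (ltnW k_ge2) l_ge2 dvd_kl.
Qed.
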